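(* Let $g\in I^+$ be an element such that $N(g)=g\theta(g)$ is affine generic. If $y\in\mathrm{GL}_{2n}(E)$ satisfies $yg\theta(y)^{-1}\in ZI^+\langle\varphi_1\rangle$, then $y\in ZI\langle\varphi_1\rangle$.
   Context: $F$ is a $p$-adic field, $E/F$ unramified quadratic with conjugation $c$, $\varpi$ a uniformizer of $F$, $\bar x$ reduction mod $\mathfrak{p}_E$. In $\mathrm{GL}_{2n}(E)$: $I$ is the set of matrices in $\mathrm{GL}_{2n}(\mathcal{O}_E)$ that are upper triangular modulo $\mathfrak{p}_E$ (Iwahori subgroup); $I^+\subset I$ those with diagonal entries in $1+\mathfrak{p}_E$; $Z=E^\times$ the scalar matrices. Affine simple components of $x\in I^+$: $(\overline{x_{12}},\ldots,\overline{x_{2n-1,2n}},\overline{x_{2n,1}\varpi^{-1}})\in k_E^{2n}$; $x$ is affine generic if all are nonzero. $\varphi_1=\begin{pmatrix}0&I_{2n-1}\\\varpi&0\end{pmatrix}$. $J$ is antidiagonal with $J_{i,2n+1-i}=(-1)^{i-1}$, $\theta(g)=J\,{}^tc(g)^{-1}J^{-1}$, $N(g)=g\theta(g)$ (note $\theta$ preserves $I^+$). *)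

From HB Require Import structures.
From mathcomp Require Import all_boot all_order all_algebra.
Set Implicit Arguments. Unset Strict Implicit. Unset Printing Implicit Defensive.
Import Order.TTheory GRing.Theory Num.Theory.
Local Open Scope ring_scope.

(* Setup: E is a complete, discretely valued field of characteristic 0 with
   finite residue field (i.e. a p-adic field), with a nontrivial involutive
   field automorphism c (so F := fixed field of c, and E/F is quadratic), and
   an element unif of F (c unif = unif) of normalized E-valuation 1; the
   latter is a uniformizer of F and says E/F is unramified.
   The valuation [val] is only meaningful on nonzero elements. *)
Record padic_unram_quad (E : fieldType) := PadicUnramQuad {
  val : E -> int;
  conj : {rmorphism E -> E};
  unif : E;
  val_mul : forall x y : E, x != 0 -> y != 0 -> val (x * y) = val x + val y;
  val_add : forall x y : E, x != 0 -> y != 0 -> x + y != 0 ->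
              Num.min (val x) (val y) <= val (x + y);
  unif_neq0 : unif != 0;
  val_unif : val unif = 1;
  conj_unif : conj unif = unif;
  conj_invol : forall x, conj (conj x) = x;
  conj_nontriv : exists x, conj x != x;
  val_conj : forall x, x != 0 -> val (conj x) = val x;
  char0 : [pchar E] =i pred0;
  residue_finite : exists s : seq E, forall x : E, (x == 0) || (0 <= val x) ->
     exists2 y, y \in s & ((y == 0) || (0 <= val y)) &&
                          ((x - y == 0) || (0 < val (x - y)));
  complete : forall u : nat -> E,
     (forall k : int, exists N, forall m p, (N <= m)%N -> (N <= p)%N ->
          u m = u p \/ k <= val (u m - u p)) ->
     exists l, forall k : int, exists N, forall m, (N <= m)%N ->
          u m = l \/ k <= val (u m - l)
}.

Section Defs.
Variables (E : fieldType) (S : padic_unram_quad E).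

Definition inO (x : E) : bool := (x == 0) || (0 <= val S x).
Definition inP (x : E) : bool := (x == 0) || (0 < val S x).

Variable m : nat.

Definition in_GLO (x : 'M[E]_m) : bool :=
  [forall i, forall j, inO (x i j)] && (\det x != 0) && (val S (\det x) == 0).

Definition in_Iw (x : 'M[E]_m) : bool :=
  in_GLO x && [forall i : 'I_m, forall j : 'I_m, (j < i)%N ==> inP (x i j)].

Definition in_Iplus (x : 'M[E]_m) : bool :=
  in_Iw x && [forall i : 'I_m, inP (x i i - 1)].

(* affine generic: all affine simple components (the residues of
   x_{i,i+1} and x_{m,1} unif^-1) are nonzero in k_E, i.e. not in p_E *)
Definition affine_generic (x : 'M[E]_m) : Prop :=
  (forall i j : 'I_m, nat_of_ord j = (nat_of_ord i).+1 -> ~~ inP (x i j)) /\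
  (forall i j : 'I_m, nat_of_ord i = m.-1 -> nat_of_ord j = 0%N ->
     ~~ inP (x i j / unif S)).

(* varphi_1 = [[0, I_{m-1}], [unif, 0]] *)
Definition phi1 : 'M[E]_m :=
  \matrix_(i, j) (if nat_of_ord j == (nat_of_ord i).+1 then 1
                  else if (nat_of_ord i == m.-1) && (nat_of_ord j == 0%N)
                       then unif S else 0).

Definition mxpowz (A : 'M[E]_m) (k : int) : 'M[E]_m :=
  match k with
  | Posz p => iter p (mulmx A) 1%:M
  | Negz p => iter p.+1 (mulmx (invmx A)) 1%:M
  end.

(* J antidiagonal with J_{i, m+1-i} = (-1)^(i-1) (1-indexed) *)
Definition Jmx : 'M[E]_m :=
  \matrix_(i, j) (if (nat_of_ord i + nat_of_ord j == m.-1)%N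
                  then (-1) ^+ (nat_of_ord i) else 0).

Definition theta (g : 'M[E]_m) : 'M[E]_m :=
  Jmx *m invmx ((map_mx (conj S) g)^T) *m invmx Jmx.

Definition Nmx (g : 'M[E]_m) : 'M[E]_m := g *m theta g.

Definition in_ZIplusPhi (x : 'M[E]_m) : Prop :=
  exists a : E, exists h : 'M[E]_m, exists k : int,
    [/\ a != 0, in_Iplus h & x = a%:M *m h *m mxpowz phi1 k].

Definition in_ZIPhi (x : 'M[E]_m) : Prop :=
  exists a : E, exists h : 'M[E]_m, exists k : int,
    [/\ a != 0, in_Iw h & x = a%:M *m h *m mxpowz phi1 k].

End Defs.

(* Write x := y g theta(y)^-1 and N := N(g) - 1.  As x lies in Z I^+ <phi1>,
   N(x) = x theta(x) = y N(g) y^-1 lies in I, so z := y^-1 intertwines N with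
   the integral matrix N' := N(x) - 1, i.e. N z = z N'.  Affine genericity
   says that N has the leading terms of phi1: in the Iwahori filtration, the
   leading entry of column p of N is its entry in row p - 1 (mod 2n).  Pick
   an entry (i0, j0) of z of extremal level d in that filtration.  Then the
   leading entry of column j0 of N^k z = z N'^k lies in row i0 - k, so the
   matrix z C, where C has the columns N'^k e_j0 (k < 2n), has a determinant
   of exactly computable valuation, while det C is bounded below since N' is
   integral.  This bounds val (det z) by the level d, which forces z, hence
   y, into I phi1^-d. *)

From Pilot Require Import Defs.
From HB Require Import structures.
From mathcomp Require Import all_boot all_order all_algebra all_fingroup zify.
Set Implicit Arguments. Unset Strict Implicit. Unset Printing Implicit Defensive.
Import Order.TTheory GRing.Theory Num.Theory.
Local Open Scope ring_scope.

Lemma invmxM (R : comUnitRingType) n (A B : 'M[R]_n) :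
  A \in unitmx -> B \in unitmx -> invmx (A *m B) = invmx B *m invmx A.
Proof.
move=> uA uB; have uAB : A *m B \in unitmx by rewrite unitmx_mul uA uB.
have e : A *m B *m (invmx B *m invmx A) = 1%:M.
  by rewrite -mulmxA (mulmxA B) mulmxV // mul1mx mulmxV.
by rewrite -[LHS]mulmx1 -e mulmxA mulVmx // mul1mx.
Qed.

Lemma mulmx1_invmx (R : comUnitRingType) n (X Y : 'M[R]_n) :
  X *m Y = 1%:M -> invmx Y = X.
Proof.
move=> XY; have [_ uY] := mulmx1_unit XY.
by rewrite -[invmx Y]mul1mx -XY -mulmxA mulmxV ?mulmx1.
Qed.

Lemma sum_ord_double n : (\sum_(k < n) k%:Z) *+ 2 = n%:Z * (n%:Z - 1).
Proof.
elim: n => [|n IH]; first by rewrite big_ord0.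
by rewrite big_ord_recr /= mulrnDl IH mulr2n; lia.
Qed.

Lemma sum_ord_gt (V : nmodType) n (j : 'I_n) (c : V) :
  \sum_(l < n) (if (j < l)%N then c else 0) = c *+ (n.-1 - j).
Proof.
rewrite -(big_mkord xpredT (fun l => if (j < l)%N then c else 0)).
rewrite (big_cat_nat (n := j.+1)) //= ?ltn_ord //.
rewrite big_nat_cond big1 => [|l /andP[/andP[_ lj] _]]; last by rewrite ltnNge -ltnS lj.
rewrite add0r big_nat_cond (eq_bigr (fun _ => c)) => [|l /andP[/andP[jl _] _]].
  by rewrite -big_nat_cond sumr_const_nat; congr (_ *+ _); lia.
by rewrite jl.
Qed.

Section Ordinals.
Variable m : nat.

Lemma sum_perm_ord (s : 'S_m) : \sum_k (s k)%:Z = \sum_(k < m) k%:Z.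
Proof. by rewrite [RHS](reindex_inj (@perm_inj _ s)). Qed.

Lemma sum_perm_shift d (s : 'S_m) :
  \sum_(i < m) (d + i%:Z - (s i)%:Z) = m%:Z * d.
Proof.
rewrite big_split big_split /= sumrN sum_perm_ord addrK.
by rewrite sumr_const card_ord -mulr_natl natz.
Qed.

Lemma ord_predE (p : 'I_m) : ord_pred p = (if p == 0 :> nat then m.-1 else p.-1) :> nat.
Proof.
case: p => [[|p] lt] /=; first by rewrite add0n modn_small // prednK.
by rewrite modnDr modn_small // ltnW.
Qed.

Lemma iter_ord_pred_mod (i0 : 'I_m) k : ((iter k (@ord_pred m) i0 + k) %% m)%N = i0.
Proof.
elim: k => [|k IH]; first by rewrite addn0 modn_small.
have predK : ((ord_pred (iter k (@ord_pred m) i0)).+1 %% m)%N = iter k (@ord_pred m) i0.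
  exact: (congr1 (@nat_of_ord m) (ord_predK _)).
by rewrite iterS addnS -addSn -modnDml predK.
Qed.

Lemma pred_orbit_inj (i0 : 'I_m) : injective (fun k : 'I_m => iter k (@ord_pred m) i0).
Proof.
move=> a b /= e; apply: ord_inj.
have := iter_ord_pred_mod i0 b; rewrite -e -(iter_ord_pred_mod i0 a) => /eqP.
by rewrite eqn_modDl !modn_small // => /eqP.
Qed.

Definition pred_orbit (i0 : 'I_m) : 'S_m := perm (@pred_orbit_inj i0).

End Ordinals.

Section Iwahori.
Variables (E : fieldType) (S : padic_unram_quad E).
Local Notation v := (Defs.val S).

(** * Valuations *)

Lemma val1 : v 1 = 0.
Proof.
have := val_mul S (oner_neq0 E) (oner_neq0 E).
by rewrite mulr1 -{1}[v 1]addr0 => /addrI <-.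
Qed.

Lemma valN x : v (- x) = v x.
Proof.
have [->|x0] := eqVneq x 0; first by rewrite oppr0.
have N10 : (-1 : E) != 0 by rewrite oppr_eq0 oner_neq0.
have vN1 : v (-1) = 0 by have := val_mul S N10 N10; rewrite mulrNN mulr1 val1; lia.
by rewrite -mulN1r val_mul // vN1 add0r.
Qed.

Lemma valV x : x != 0 -> v x^-1 = - v x.
Proof.
move=> x0; have := val_mul S x0 (invr_neq0 x0).
by rewrite mulfV // val1; lia.
Qed.

Variable m : nat.
Hypothesis m_gt0 : (0 < m)%N.

Let mZ_gt0 : 0 < m%:Z. Proof. by rewrite ltz_nat. Qed.

(* Valuations are scaled by [m] so that the exponent [(d + i - j) / m] of
   the Iwahori filtration below becomes the integer [d + i - j]. *)
Definition mval (x : E) : int := m%:Z * v x.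

Definition mval_ge (D : int) (x : E) : bool := (x == 0) || (D <= mval x).

Lemma mvalM x y : x != 0 -> y != 0 -> mval (x * y) = mval x + mval y.
Proof. by move=> x0 y0; rewrite /mval val_mul // mulrDr. Qed.

Lemma mvalN x : mval (- x) = mval x.
Proof. by rewrite /mval valN. Qed.

Lemma mvalV x : x != 0 -> mval x^-1 = - mval x.
Proof. by move=> x0; rewrite /mval valV // mulrN. Qed.

Lemma mval1 : mval 1 = 0.
Proof. by rewrite /mval val1 mulr0. Qed.

Lemma mval_sign k : mval ((-1) ^+ k) = 0.
Proof. by rewrite -signr_odd /mval; case: odd; rewrite ?expr1 ?valN val1 mulr0. Qed.

Lemma mval_ge_mval x : mval_ge (mval x) x.
Proof. by rewrite /mval_ge lexx orbT. Qed.

Lemma mval_ge_zero D : mval_ge D 0.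
Proof. by rewrite /mval_ge eqxx. Qed.

Lemma mval_ge_sign k : mval_ge 0 ((-1) ^+ k).
Proof. by rewrite /mval_ge mval_sign lexx orbT. Qed.

Lemma mval_geW (D' D : int) x : D' <= D -> mval_ge D x -> mval_ge D' x.
Proof. by rewrite /mval_ge => le /orP[->|/(le_trans le) ->]; rewrite ?orbT. Qed.

Lemma mval_geN D x : mval_ge D (- x) = mval_ge D x.
Proof. by rewrite /mval_ge oppr_eq0 mvalN. Qed.

Lemma mval_geD D x y : mval_ge D x -> mval_ge D y -> mval_ge D (x + y).
Proof.
have [->|x0] := eqVneq x 0; first by rewrite add0r.
have [->|y0] := eqVneq y 0; first by rewrite addr0.
have [->|s0] := eqVneq (x + y) 0; first by rewrite mval_ge_zero.
rewrite /mval_ge /mval (negbTE x0) (negbTE y0) (negbTE s0) /= => Dx Dy.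
have := val_add S x0 y0 s0; rewrite ge_min => /orP[vx|vy].
- exact: le_trans Dx (ler_wpM2l (ltW mZ_gt0) vx).
- exact: le_trans Dy (ler_wpM2l (ltW mZ_gt0) vy).
Qed.

Lemma mval_geB D x y : mval_ge D x -> mval_ge D y -> mval_ge D (x - y).
Proof. by move=> Dx Dy; apply: mval_geD; rewrite ?mval_geN. Qed.

Lemma mval_geM D D' x y : mval_ge D x -> mval_ge D' y -> mval_ge (D + D') (x * y).
Proof.
have [->|x0] := eqVneq x 0; first by rewrite mul0r => _ _; apply: mval_ge_zero.
have [->|y0] := eqVneq y 0; first by rewrite mulr0 => _ _; apply: mval_ge_zero.
by rewrite /mval_ge mulf_eq0 (negbTE x0) (negbTE y0) mvalM //; apply: lerD.
Qed.

Lemma mval_ge_sum (I : Type) (r : seq I) (P : pred I) (F : I -> E) D :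
  (forall i, P i -> mval_ge D (F i)) -> mval_ge D (\sum_(i <- r | P i) F i).
Proof.
by move=> DF; apply: (big_ind (mval_ge D)) => //; [apply: mval_ge_zero | apply: mval_geD].
Qed.

Lemma mval_ge_prod (I : finType) (P : pred I) (F : I -> E) (a : I -> int) :
  (forall i, P i -> mval_ge (a i) (F i)) ->
  mval_ge (\sum_(i | P i) a i) (\prod_(i | P i) F i).
Proof.
move=> aF; apply: (big_ind2 (fun x D => mval_ge D x)) => //.
- by rewrite -mval1 mval_ge_mval.
- by move=> x D y D' Dx D'y; apply: mval_geM.
Qed.

Lemma mval_dom x y : x != 0 -> mval_ge (mval x + 1) y ->
  x + y != 0 /\ mval (x + y) = mval x.
Proof.
move=> x0 xy.
have xs : mval_ge (mval x) (x + y).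
  by apply: mval_geD (mval_ge_mval x) (mval_geW _ xy); rewrite lerDl.
have sx : ~~ mval_ge (mval x + 1) (x + y).
  apply: contraL (x0) => xys; have := mval_geB xys xy; rewrite addrK /mval_ge.
  by rewrite gerDl ler10 orbF negbK.
move: xs sx; rewrite /mval_ge negb_or => /orP[/eqP-> |xs]; first by rewrite eqxx.
by case/andP=> -> /=; rewrite -ltNge ltzD1 => sx; split=> //; apply/eqP; rewrite eq_le sx.
Qed.

Lemma mval_dom_sum (I : finType) (P : pred I) (F : I -> E) i0 :
  P i0 -> F i0 != 0 ->
  (forall i, P i -> i != i0 -> mval_ge (mval (F i0) + 1) (F i)) ->
  \sum_(i | P i) F i != 0 /\ mval (\sum_(i | P i) F i) = mval (F i0).
Proof.
move=> Pi0 Fi0 dom; rewrite (bigD1 i0) //=; apply: mval_dom => //.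
by apply: mval_ge_sum => i /andP[]; apply: dom.
Qed.

Lemma mval_ge_roundup k D x :
  m%:Z * (k - 1) < D -> mval_ge D x -> mval_ge (m%:Z * k) x.
Proof.
rewrite /mval_ge /mval => lt /orP[->//|le]; apply/orP; right.
have : k - 1 < v x by rewrite -(ltr_pM2l mZ_gt0) (lt_le_trans lt le).
by rewrite ltrBlDr ltzD1 => /(ler_wpM2l (ltW mZ_gt0)).
Qed.

Lemma mval_ge_exact k x :
  mval_ge (m%:Z * k) x -> ~~ mval_ge (m%:Z * (k + 1)) x ->
  x != 0 /\ mval x = m%:Z * k.
Proof.
rewrite /mval_ge /mval negb_or => /orP[->//|le] /andP[x0 lt]; split=> //.
rewrite ler_pM2l // in le; rewrite -ltNge ltr_pM2l // ltzD1 in lt.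
by congr (_ * _); apply/eqP; rewrite eq_le lt le.
Qed.

Lemma mval_eq_ord a (i j : 'I_m) x y :
  mval x = a + i%:Z -> mval y = a + j%:Z -> i = j.
Proof.
rewrite /mval => ex ey; apply: ord_inj.
have hi := ltn_ord i; have hj := ltn_ord j.
have e : m%:Z * (v x - v y) = i%:Z - j%:Z by rewrite mulrBr ex ey; lia.
have [t1|[t0|t1]] : v x - v y <= -1 \/ v x - v y = 0 \/ 1 <= v x - v y by lia.
- by have := ler_wpM2l (ltW mZ_gt0) t1; lia.
- by move: e; rewrite t0 mulr0; lia.
- by have := ler_wpM2l (ltW mZ_gt0) t1; lia.
Qed.

Lemma inOE x : inO S x = mval_ge 0 x.
Proof. by rewrite /inO /mval_ge /mval pmulr_rge0. Qed.

Lemma inPE x : inP S x = mval_ge m%:Z x.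
Proof. by rewrite /inP /mval_ge /mval -[X in X <= _]mulr1 ler_pM2l // -gtz0_ge1. Qed.

(** * The Iwahori filtration *)

(* [mx_ge d A] says that [A] lies in [phi1 ^ d] times the Iwahori order:
   entry [(i, j)] has valuation at least [(d + i - j) / m]. *)
Definition mx_ge (d : int) (A : 'M[E]_m) : Prop :=
  forall i j : 'I_m, mval_ge (d + i%:Z - j%:Z) (A i j).

Lemma mx_geW (d' d : int) A : d' <= d -> mx_ge d A -> mx_ge d' A.
Proof. by move=> le dA i j; apply: mval_geW (dA i j); lia. Qed.

Lemma mx_geD d A B : mx_ge d A -> mx_ge d B -> mx_ge d (A + B).
Proof. by move=> dA dB i j; rewrite mxE; apply: mval_geD. Qed.

Lemma mx_geN d A : mx_ge d A -> mx_ge d (- A).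
Proof. by move=> dA i j; rewrite mxE mval_geN. Qed.

Lemma mx_geB d A B : mx_ge d A -> mx_ge d B -> mx_ge d (A - B).
Proof. by move=> dA dB; apply: mx_geD (mx_geN dB). Qed.

Lemma mx_geM d e A B : mx_ge d A -> mx_ge e B -> mx_ge (d + e) (A *m B).
Proof.
move=> dA eB i j; rewrite mxE; apply: mval_ge_sum => k _.
by apply: mval_geW (mval_geM (dA i k) (eB k j)); lia.
Qed.

Lemma mx_ge_scalar a : mx_ge (mval a) a%:M.
Proof.
move=> i j; rewrite mxE; have [<-|_] := eqVneq i j; last exact: mval_ge_zero.
by rewrite addrK mulr1n mval_ge_mval.
Qed.

Lemma mx_ge1 : mx_ge 0 1%:M.
Proof. by rewrite -mval1; apply: mx_ge_scalar. Qed.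

Lemma det_mval_ge (a : 'I_m -> 'I_m -> int) D (A : 'M[E]_m) :
  (forall i j, mval_ge (a i j) (A i j)) ->
  (forall s : 'S_m, D <= \sum_i a i (s i)) -> mval_ge D (\det A).
Proof.
move=> aA Da; apply: mval_ge_sum => s _; apply: mval_geW (Da s) _.
by rewrite -[X in mval_ge X _]add0r; apply: mval_geM (mval_ge_sign _) (mval_ge_prod _).
Qed.

Lemma mx_ge_det d A : mx_ge d A -> mval_ge (m%:Z * d) (\det A).
Proof. by move=> dA; apply: det_mval_ge dA _ => s; rewrite sum_perm_shift. Qed.

Lemma mx_ge_inv d A : mx_ge d A -> A \in unitmx -> mval (\det A) <= m%:Z * d ->
  mx_ge (- d) (invmx A).
Proof.
move=> dA uA detA i j; rewrite /invmx uA !mxE.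
have det0 : \det A != 0 by rewrite -unitfE -unitmxE.
have cof : mval_ge ((m%:Z - 1) * d + i%:Z - j%:Z) (cofactor A j i).
  rewrite expand_cofactor; apply: mval_ge_sum => s /eqP sj.
  rewrite -[X in mval_ge X _]add0r; apply: mval_geM (mval_ge_sign _) _.
  apply: mval_geW (mval_ge_prod (fun k _ => dA k (s k))).
  have := sum_perm_shift d s; rewrite (bigD1 j) //= sj.
  rewrite (eq_bigl (fun k => j != k)) => [|k]; last by rewrite eq_sym.
  by move/(canRL (addKr _)) ->; lia.
have detV : mval_ge (- mval (\det A)) (\det A)^-1 by rewrite -mvalV // mval_ge_mval.
by apply: mval_geW (mval_geM detV cof); lia.
Qed.

(* The coset [I phi1^d]; cf. [in_ZIPhi_of_Iw_coset]. *)
Definition Iw_coset (d : int) (A : 'M[E]_m) : Prop :=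
  [/\ A \in unitmx, mx_ge d A & mx_ge (- d) (invmx A)].

Lemma Iw_cosetM d e A B : Iw_coset d A -> Iw_coset e B -> Iw_coset (d + e) (A *m B).
Proof.
case=> uA dA dAV [uB eB eBV]; split; first by rewrite unitmx_mul uA uB.
  exact: mx_geM.
by rewrite invmxM // opprD addrC; apply: mx_geM.
Qed.

Lemma Iw_cosetV d A : Iw_coset d A -> Iw_coset (- d) (invmx A).
Proof. by case=> uA dA dAV; split; rewrite ?unitmx_inv ?invmxK ?opprK. Qed.

Lemma Iw_coset_scalar a : a != 0 -> Iw_coset (mval a) a%:M.
Proof.
move=> a0; split; first by rewrite unitmxE det_scalar unitfE expf_neq0.
  exact: mx_ge_scalar.
by rewrite invmx_scalar -mvalV //; apply: mx_ge_scalar.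
Qed.

Lemma Iw_coset_iter d A k : Iw_coset d A -> Iw_coset (k%:Z * d) (iter k (mulmx A) 1%:M).
Proof.
move=> dA; elim: k => [|k IH] /=.
  by rewrite mul0r -mval1; apply: Iw_coset_scalar; rewrite oner_neq0.
by rewrite -add1n PoszD mulrDl mul1r; apply: Iw_cosetM.
Qed.

Lemma Iw_coset_mxpowz d A (k : int) : Iw_coset d A -> Iw_coset (k * d) (mxpowz A k).
Proof.
case: k => k dA /=; first exact: Iw_coset_iter.
by rewrite NegzE mulNr -mulrN; apply: Iw_coset_iter; apply: Iw_cosetV.
Qed.

Lemma Iw_coset0 (h : 'M[E]_m) : Iw_coset 0 h <-> in_Iw S h.
Proof.
split=> [[uh h0 hV0]|].
  have det0 : \det h != 0 by rewrite -unitfE -unitmxE.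
  have vdet : v (\det h) = 0.
    have := mx_ge_det h0; have := mx_ge_det hV0; rewrite det_inv /mval_ge invr_eq0.
    rewrite (negbTE det0) mvalV //= !mulr0 oppr_ge0 => le0 ge0.
    have /eqP : mval (\det h) = 0 by apply/eqP; rewrite eq_le le0 ge0.
    by rewrite mulf_eq0 gt_eqF //= => /eqP.
  rewrite /in_Iw /in_GLO det0 vdet eqxx !andbT.
  apply/andP; split; apply/forallP => i; apply/forallP => j; have := ltn_ord j.
    by rewrite inOE -(mulr0 m%:Z) => jm; apply: mval_ge_roundup (h0 i j); lia.
  move=> jm; apply/implyP => ji; rewrite inPE -[m%:Z]mulr1.
  by apply: mval_ge_roundup (h0 i j); lia.
move=> /andP[/andP[/andP[/forallP hO det0] vdet] /forallP hP].
have uh : h \in unitmx by rewrite unitmxE unitfE.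
have h0 : mx_ge 0 h.
  move=> i j; have := ltn_ord i; case: (ltnP j i) => ji im.
    by have /forallP/(_ j) := hP i; rewrite ji inPE; apply: mval_geW; lia.
  by have /forallP/(_ j) := hO i; rewrite inOE; apply: mval_geW; lia.
split=> //; rewrite -oppr0; apply: mx_ge_inv => //.
by rewrite /mval (eqP vdet) !mulr0.
Qed.

Lemma in_Iplus_sub1 (h : 'M[E]_m) : in_Iplus S h -> mx_ge 1 (h - 1%:M).
Proof.
case/andP=> /Iw_coset0[_ h0 _] /forallP hd i j; rewrite !mxE.
have := ltn_ord i; have := ltn_ord j => jm im.
have [<-|ij] := eqVneq i j.
  by have := hd i; rewrite mulr1n inPE; apply: mval_geW; lia.
have {}ij : (i : nat) != j := ij; rewrite mulr0n subr0.
case: (ltnP j i) => ji.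
  by apply: mval_geW (mval_ge_roundup (k := 1) _ (h0 i j)); lia.
by apply: mval_geW (mval_ge_roundup (k := 0) _ (h0 i j)); lia.
Qed.

(** * Leading entries and determinants *)

(* Relative to the weights of [mx_ge], [f] has a unique leading entry, at [p]. *)
Definition lead_entry (w : int) (f : 'I_m -> E) (p : 'I_m) : Prop :=
  [/\ f p != 0, mval (f p) = w + p%:Z &
      forall i : 'I_m, i != p -> mval_ge (w + i%:Z + 1) (f i)].

Lemma lead_entry_mval_ge w f p :
  lead_entry w f p -> forall i : 'I_m, mval_ge (w + i%:Z) (f i).
Proof.
case=> _ fp fi i; have [->|ip] := eqVneq i p; first by rewrite -fp mval_ge_mval.
by apply: mval_geW (fi i ip); lia.
Qed.

Lemma lead_entry_ext w f g p : f =1 g -> lead_entry w f p -> lead_entry w g p.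
Proof. by move=> fg [f0 vf fi]; split=> [||i]; rewrite -!fg //; apply: fi. Qed.

Lemma mx_ge_lead d A i j : mx_ge d A -> A i j != 0 -> mval (A i j) = d + i%:Z - j%:Z ->
  lead_entry (d - j%:Z) (fun k => A k j) i.
Proof.
move=> dA Aij vAij; split=> [//||k ki]; first by rewrite vAij; lia.
have := dA k j; rewrite /mval_ge; case: eqP => //= _.
rewrite le_eqVlt => /orP[/eqP vAkj|]; last by lia.
by case/eqP: ki; apply: (@mval_eq_ord (d - j%:Z) _ _ (A k j) (A i j)); lia.
Qed.

Lemma mval_prod (I : finType) (F : I -> E) : (forall i, F i != 0) ->
  \prod_i F i != 0 /\ mval (\prod_i F i) = \sum_i mval (F i).
Proof.
move=> F0; apply: (big_ind2 (fun x D => x != 0 /\ mval x = D)) => //.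
  by rewrite oner_neq0 mval1.
by move=> x D y D' [x0 <-] [y0 <-]; rewrite mulf_neq0 // mvalM.
Qed.

Lemma det_lead_cols (A : 'M[E]_m) (w : 'I_m -> int) (s : 'S_m) :
  (forall k, lead_entry (w k) (fun i => A i k) (s k)) ->
  \det A != 0 /\ mval (\det A) = \sum_k (w k + (s k)%:Z).
Proof.
move=> lead; rewrite -det_tr.
have [prod0 vprod] : \prod_k A^T k (s k) != 0 /\
    mval (\prod_k A^T k (s k)) = \sum_k (w k + (s k)%:Z).
  have [k|prod0 ->] := @mval_prod _ (fun k => A^T k (s k)).
    by rewrite mxE; case: (lead k).
  by split=> //; apply: eq_bigr => k _; rewrite mxE; case: (lead k).
have dom (t : 'S_m) : t != s ->
    mval_ge (\sum_k (w k + (s k)%:Z) + 1) (\prod_k A^T k (t k)).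
  move=> ts; have [k1 tk1] : exists k, t k != s k.
    apply/existsP; apply: contraR ts; rewrite negb_exists => /forallP ts.
    by apply/eqP/permP => k; apply/eqP; rewrite -[_ == _]negbK ts.
  have -> : \sum_k (w k + (s k)%:Z) = \sum_k (w k + (t k)%:Z).
    by rewrite !big_split /= !sum_perm_ord.
  rewrite [\prod_k _](bigD1 k1) //= [\sum_k _](bigD1 k1) //= mxE addrAC.
  apply: mval_geM; first by case: (lead k1) => _ _; apply.
  by apply: mval_ge_prod => k _; rewrite mxE; apply: (lead_entry_mval_ge (lead k)).
have sgn0 (t : 'S_m) : (-1) ^+ t != 0 :> E by rewrite signr_eq0.
have [||det0 ->] := @mval_dom_sum _ xpredT
    (fun t : 'S_m => (-1) ^+ t * \prod_k A^T k (t k)) s isT.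
- exact: mulf_neq0.
- move=> t _ ts; rewrite mvalM // mval_sign add0r vprod -[X in mval_ge X _]add0r.
  exact: mval_geM (mval_ge_sign _) (dom t ts).
- by rewrite mvalM // mval_sign add0r.
Qed.

Lemma lead_entry_mulmx e w (N X : 'M[E]_m) (c p q : 'I_m) :
  mx_ge e N -> lead_entry (e - p%:Z) (fun i => N i p) q ->
  lead_entry w (fun i => X i c) p -> lead_entry (w + e) (fun i => (N *m X) i c) q.
Proof.
move=> eN [Nqp0 vNqp Nip] [Xpc0 vXpc Xjc].
have rest i j : (i, j) != (q, p) -> mval_ge (w + e + i%:Z + 1) (N i j * X j c).
  have [->|jp _] := eqVneq j p.
    rewrite xpair_eqE eqxx andbT => iq.
    by apply: mval_geW (mval_geM (Nip i iq) (mval_ge_mval _)); rewrite vXpc; lia.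
  by apply: mval_geW (mval_geM (eN i j) (Xjc j jp)); lia.
have vNX : mval (N q p * X p c) = w + e + q%:Z by rewrite mvalM // vNqp vXpc; lia.
have [||NX0 vNXq] := @mval_dom_sum _ xpredT (fun j => N q j * X j c) p isT.
- by rewrite mulf_neq0.
- by move=> j _ jp; rewrite vNX; apply: rest; rewrite xpair_eqE negb_and jp orbT.
split=> [||i iq]; rewrite mxE //; first by rewrite vNXq.
by apply: mval_ge_sum => j _; apply: rest; rewrite xpair_eqE negb_and iq.
Qed.

Lemma mx_ge_extremal (A : 'M[E]_m) : A != 0 ->
  exists d i j, [/\ mx_ge d A, A i j != 0 & mval (A i j) = d + i%:Z - j%:Z].
Proof.
move=> A0; have [[i1 j1] /= Aij1] : exists ij : 'I_m * 'I_m, A ij.1 ij.2 != 0.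
  apply/existsP; apply: contraR A0; rewrite negb_exists => /forallP A0.
  by apply/eqP/matrixP => i j; rewrite mxE; apply/eqP; rewrite -[_ == _]negbK (A0 (i, j)).
pose F (ij : 'I_m * 'I_m) := mval (A ij.1 ij.2) - ij.1%:Z + ij.2%:Z.
have [[i j] /= Aij Fmin] :=
  @arg_minP _ _ _ (i1, j1) (fun ij => A ij.1 ij.2 != 0) F Aij1.
exists (F (i, j)), i, j; split=> //=; last by rewrite /F /=; lia.
move=> k l; rewrite /mval_ge; case: eqP => //= /eqP Akl.
by have := Fmin (k, l) Akl; rewrite /F /=; lia.
Qed.


(* The entries [N_{p-1,p}] (indices mod [m]) have exactly the valuations of
   those of [phi1]: 1 for [p = 0], and 0 otherwise. *)
Definition phi1_like (N : 'M[E]_m) : Prop :=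
  mx_ge 1 N /\ forall p : 'I_m,
    N (ord_pred p) p != 0 /\ mval (N (ord_pred p) p) = 1 + (ord_pred p)%:Z - p%:Z.

Lemma phi1_like_lead N (p : 'I_m) :
  phi1_like N -> lead_entry (1 - p%:Z) (fun i => N i p) (ord_pred p).
Proof. by case=> N1 /(_ p) [N0 vN]; apply: mx_ge_lead. Qed.

Lemma lead_entry_iter (N X : 'M[E]_m) w (c p : 'I_m) k : phi1_like N ->
  lead_entry w (fun i => X i c) p ->
  lead_entry (w + k%:Z) (fun i => iter k (mulmx N) X i c) (iter k (@ord_pred m) p).
Proof.
move=> N1 lead; elim: k => [|k IH]; first by rewrite addr0.
have -> : w + k.+1%:Z = w + k%:Z + 1 by lia.
by rewrite !iterS; apply: lead_entry_mulmx IH; [case: N1 | apply: phi1_like_lead].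
Qed.

Lemma phi1_like_det N : phi1_like N -> \det N != 0 /\ mval (\det N) = m%:Z.
Proof.
move=> N1.
have [k|det0 ->] := @det_lead_cols N (fun k => 1 - k%:Z) (perm (@ord_pred_inj m)).
  by rewrite permE; apply: phi1_like_lead.
split=> //; rewrite big_split /= sum_perm_ord sumrB subrK.
by rewrite sumr_const card_ord natz.
Qed.

Local Notation phi1 := (phi1 S m).

Lemma mval_unif : mval (unif S) = m%:Z.
Proof. by rewrite /mval val_unif mulr1. Qed.

Lemma phi1_like_phi1 : phi1_like phi1.
Proof.
split=> [i j|p]; rewrite mxE.
  case: eqP => [->|_]; first by apply: mval_geW (mval_ge_mval 1); rewrite mval1; lia.
  case: andP => [[/eqP-> /eqP->]|_]; last exact: mval_ge_zero.
  by rewrite /mval_ge mval_unif; lia.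
rewrite ord_predE; case: p => [[|p] lt] /=.
  by rewrite !eqxx unif_neq0 mval_unif; split=> //; lia.
by rewrite eqxx oner_neq0 mval1; split=> //; lia.
Qed.

Lemma Iw_coset_phi1 : Iw_coset 1 phi1.
Proof.
have [N1 _] := phi1_like_phi1; have [det0 vdet] := phi1_like_det phi1_like_phi1.
have u : phi1 \in unitmx by rewrite unitmxE unitfE.
by split=> //; apply: mx_ge_inv => //; rewrite vdet mulr1.
Qed.

Lemma Iw_coset_phi1_pow k : Iw_coset k (mxpowz phi1 k).
Proof. by rewrite -[X in Iw_coset X]mulr1; apply: Iw_coset_mxpowz Iw_coset_phi1. Qed.

Lemma mx_ge_iter A k : mx_ge 0 A -> mx_ge 0 (iter k (mulmx A) 1%:M).
Proof.
move=> A0; elim: k => [|k IH] /=; first exact: mx_ge1.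
by rewrite -[0]addr0; apply: mx_geM.
Qed.

Lemma iter_intertwine (N N' z : 'M[E]_m) k : N *m z = z *m N' ->
  iter k (mulmx N) z = z *m iter k (mulmx N') 1%:M.
Proof.
move=> Nz; elim: k => [|k IH] /=; first by rewrite mulmx1.
by rewrite IH mulmxA Nz -mulmxA.
Qed.

Lemma unitmx_neq0 (z : 'M[E]_m) : z \in unitmx -> z != 0.
Proof.
move=> uz; apply: contraTneq uz => ->; apply/negP => u0.
have /matrixP /(_ (Ordinal m_gt0) (Ordinal m_gt0)) := mulmxV u0.
by rewrite mul0mx !mxE eqxx => /eqP; rewrite eq_sym oner_eq0.
Qed.

Lemma mval_ge_det_cols (C : 'M[E]_m) (j0 : 'I_m) :
  (forall l k : 'I_m, mval_ge (l%:Z - j0%:Z) (C l k)) ->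
  mval_ge (m%:Z * (m%:Z - 1 - j0%:Z)) (\det C).
Proof.
move=> Cj0; have j0m := ltn_ord j0.
have -> : m%:Z * (m%:Z - 1 - j0%:Z) = \sum_(l < m) (if (j0 < l)%N then m%:Z else 0).
  by rewrite sum_ord_gt -mulr_natr natz; congr (_ * _); lia.
apply: (@det_mval_ge (fun l _ => if (j0 < l)%N then m%:Z else 0)) => // l k.
by case: ifP => jl; [rewrite -[m%:Z]mulr1 | rewrite -(mulr0 m%:Z)];
  apply: mval_ge_roundup (Cj0 l k); lia.
Qed.

Lemma phi1_like_intertwiner N N' z :
  phi1_like N -> mx_ge 0 N' -> z \in unitmx -> N *m z = z *m N' ->
  exists d, Iw_coset d z.
Proof.
move=> N1 N'0 uz Nz.
have [d [i0 [j0 [dz z0 vz]]]] := mx_ge_extremal (unitmx_neq0 uz).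
pose C : 'M[E]_m := \matrix_(l, k) iter k (mulmx N') 1%:M l j0.
have zC (k : 'I_m) :
    lead_entry (d - j0%:Z + k%:Z) (fun i => (z *m C) i k) (pred_orbit i0 k).
  rewrite permE; apply: lead_entry_ext (lead_entry_iter k N1 (mx_ge_lead dz z0 vz)) => i.
  by rewrite (iter_intertwine k Nz) !mxE; apply: eq_bigr => l _; rewrite mxE.
have sum_orbit : \sum_(k < m) (d - j0%:Z + k%:Z + (pred_orbit i0 k)%:Z) =
    m%:Z * (d - j0%:Z) + m%:Z * (m%:Z - 1).
  rewrite big_split big_split /= sum_perm_ord sumr_const card_ord -mulr_natl natz.
  by rewrite -addrA -sum_ord_double mulr2n.
have det_C : mval_ge (m%:Z * (m%:Z - 1 - j0%:Z)) (\det C).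
  by apply: mval_ge_det_cols => l k; rewrite mxE -[l%:Z]add0r; apply: mx_ge_iter.
have [] := det_lead_cols zC; rewrite det_mulmx mulf_eq0 negb_or => /andP[det_z0 det_C0].
rewrite mvalM // sum_orbit => vdet.
exists d; split=> //; apply: mx_ge_inv dz uz _.
move: det_C vdet; rewrite /mval_ge (negbTE det_C0) /=.
(* Both determinants occur with two different instance paths, which [lia]
   would read as distinct atoms. *)
by move: (mval (\det C)) (mval (\det z)) => X Y XC YX; lia.
Qed.

(** * The involution theta *)

Hypothesis m_even : ~~ odd m.

Local Notation J := (@Jmx E m).
Local Notation cj := (conj S).

Lemma sign_rev_ord (i : 'I_m) : (-1) ^+ rev_ord i = - (-1) ^+ i :> E.
Proof.
have odd_rev : odd (rev_ord i) = ~~ odd i.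
  have : odd (rev_ord i + i).
    have -> : (rev_ord i + i = m.-1)%N by rewrite /=; have := ltn_ord i; lia.
    by have := m_even; rewrite -(prednK m_gt0) /= negbK.
  by rewrite oddD; case: odd; case: odd.
by rewrite -signr_odd odd_rev -[in RHS]signr_odd; case: odd; rewrite ?expr1 ?expr0 ?opprK.
Qed.

Lemma JE i j : J i j = if j == rev_ord i then (-1) ^+ i else 0.
Proof.
rewrite mxE -val_eqE /=; have := ltn_ord i; have := ltn_ord j => jm im.
by have -> : ((i + j)%N == m.-1) = (j == (m - i.+1)%N :> nat) by apply/eqP/eqP; lia.
Qed.

Lemma mulJmx (X : 'M[E]_m) i l : (J *m X) i l = (-1) ^+ i * X (rev_ord i) l.
Proof.
rewrite mxE (bigD1 (rev_ord i)) //= JE eqxx big1 ?addr0 // => j /negbTE ji.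
by rewrite JE ji mul0r.
Qed.

Lemma mulmxJ (X : 'M[E]_m) i k : (X *m J) i k = X i (rev_ord k) * (-1) ^+ rev_ord k.
Proof.
rewrite mxE (bigD1 (rev_ord k)) //= JE rev_ordK eqxx big1 ?addr0 // => j jk.
by rewrite JE eq_sym (can2_eq rev_ordK rev_ordK) (negbTE jk) mulr0.
Qed.

Lemma JJ : J *m J = - 1%:M.
Proof.
apply/matrixP => i l; rewrite mulJmx JE rev_ordK !mxE eq_sym.
case: eqP => [->|_]; last by rewrite mulr0 oppr0.
by rewrite sign_rev_ord mulrN -expr2 sqrr_sign.
Qed.

Lemma invJ : invmx J = - J.
Proof. by apply: mulmx1_invmx; rewrite mulNmx JJ opprK. Qed.

Lemma unitmxJ : J \in unitmx.
Proof. by have [] := @mulmx1_unit _ _ J (- J); rewrite // mulmxN JJ opprK. Qed.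

Lemma trmxJ : J^T = - J.
Proof.
apply/matrixP => i j; rewrite [J^T i j]mxE [(- J) i j]mxE !JE.
rewrite eq_sym (can2_eq rev_ordK rev_ordK).
by case: eqP => [->|_]; rewrite ?sign_rev_ord ?oppr0.
Qed.

Lemma map_conj_J : map_mx cj J = J.
Proof. by apply/matrixP => i j; rewrite !mxE (fun_if cj) rmorph_sign rmorph0. Qed.

Lemma map_conjK (A : 'M[E]_m) : map_mx cj (map_mx cj A) = A.
Proof. by apply/matrixP => i j; rewrite !mxE conj_invol. Qed.

Definition twist (B : 'M[E]_m) : 'M[E]_m := J *m (map_mx cj B)^T *m invmx J.

Lemma thetaE A : theta S A = twist (invmx A).
Proof. by rewrite /twist map_invmx trmx_inv. Qed.

Lemma twist1 : twist 1%:M = 1%:M.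
Proof. by rewrite /twist map_mx1 trmx1 mulmx1 mulmxV // unitmxJ. Qed.

Lemma twistB A B : twist (A - B) = twist A - twist B.
Proof. by rewrite /twist map_mxB linearB /= mulmxBr mulmxBl. Qed.

Lemma twistM A B : twist (A *m B) = twist B *m twist A.
Proof.
by rewrite /twist map_mxM trmx_mul !mulmxA mulmxKV // unitmxJ.
Qed.

Lemma twistK A : twist (twist A) = A.
Proof.
have trNJ : (- J)^T = J by rewrite -trmxJ trmxK.
rewrite /twist invJ !map_mxM map_mxN map_trmx map_conj_J map_conjK.
rewrite !trmx_mul trmxK trNJ trmxJ !mulmxN !mulNmx opprK !mulmxA JJ !mulNmx mul1mx.
by rewrite -mulmxA JJ mulmxN mulmx1 opprK.
Qed.

Lemma mx_ge_twist d B : mx_ge d B -> mx_ge d (twist B).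
Proof.
move=> dB i k; rewrite /twist invJ mulmxN mxE mval_geN mulmxJ mulJmx !mxE.
rewrite -[X in mval_ge X _]addr0 -[X in mval_ge (X + _) _]add0r.
apply: mval_geM (mval_ge_sign _); apply: mval_geM (mval_ge_sign _) _.
move: (dB (rev_ord k) (rev_ord i)); rewrite /mval_ge fmorph_eq0 /mval.
case: eqP => //= /eqP B0; rewrite val_conj //; apply: le_trans.
by rewrite /=; have := ltn_ord i; have := ltn_ord k; lia.
Qed.

Lemma twist_theta (A : 'M[E]_m) : A \in unitmx -> twist A *m theta S A = 1%:M.
Proof. by move=> uA; rewrite thetaE -twistM mulVmx // twist1. Qed.

Lemma theta_unit (A : 'M[E]_m) : A \in unitmx -> theta S A \in unitmx.
Proof. by move=> uA; case: (mulmx1_unit (twist_theta uA)). Qed.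

Lemma invmx_theta (A : 'M[E]_m) : A \in unitmx -> invmx (theta S A) = twist A.
Proof. by move=> uA; apply: mulmx1_invmx; apply: twist_theta. Qed.

Lemma thetaM (A B : 'M[E]_m) : A \in unitmx -> B \in unitmx ->
  theta S (A *m B) = theta S A *m theta S B.
Proof. by move=> uA uB; rewrite !thetaE invmxM // twistM. Qed.

Lemma theta_invmx (A : 'M[E]_m) : theta S (invmx A) = twist A.
Proof. by rewrite thetaE invmxK. Qed.

Lemma Iw_coset_theta d (A : 'M[E]_m) : Iw_coset d A -> Iw_coset (- d) (theta S A).
Proof.
case=> uA dA dAV; split; first exact: theta_unit.
  by rewrite thetaE; apply: mx_ge_twist.
by rewrite invmx_theta // opprK; apply: mx_ge_twist.
Qed.

(** * Twisted conjugacy *)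

Hypothesis m_gt1 : (1 < m)%N.

Lemma affine_generic_phi1_like (u : 'M[E]_m) :
  mx_ge 1 (u - 1%:M) -> affine_generic S u -> phi1_like (u - 1%:M).
Proof.
move=> u1 [ag1 ag2]; split=> // p.
have pp : ord_pred p != p.
  by apply/eqP => /(congr1 (@nat_of_ord m)); rewrite ord_predE; case: ifP; lia.
have := u1 (ord_pred p) p; rewrite !mxE (negbTE pp) mulr0n subr0 ord_predE.
have [p0|p0] := eqVneq (p : nat) 0%N.
  have pm : ord_pred p = m.-1 :> nat by rewrite ord_predE p0.
  have -> : 1 + (m.-1)%:Z - p%:Z = m%:Z * 1 by rewrite p0; lia.
  move=> lb; apply: mval_ge_exact lb _; apply: contra (ag2 _ _ pm p0) => u2.
  have := mval_geM u2 (mval_ge_mval (unif S)^-1); rewrite inPE mvalV ?unif_neq0 //.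
  by rewrite mval_unif; apply: mval_geW; lia.
have -> : 1 + (p.-1)%:Z - p%:Z = m%:Z * 0 by lia.
move=> lb; apply: mval_ge_exact lb _; rewrite add0r mulr1 -inPE; apply: ag1.
by rewrite ord_predE (negbTE p0); lia.
Qed.

Lemma mx_ge_theta_sub1 (A : 'M[E]_m) :
  Iw_coset 0 A -> mx_ge 1 (A - 1%:M) -> mx_ge 1 (theta S A - 1%:M).
Proof.
case=> uA _ AV A1; rewrite thetaE -twist1 -twistB; apply: mx_ge_twist.
have -> : invmx A - 1%:M = - (invmx A *m (A - 1%:M)).
  by rewrite mulmxBr mulVmx // mulmx1 opprB.
by apply: mx_geN; rewrite -[1]add0r -[0]oppr0; apply: mx_geM.
Qed.

Lemma Nmx_sub1 (g : 'M[E]_m) : in_Iplus S g -> mx_ge 1 (Nmx S g - 1%:M).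
Proof.
move=> gI; have [gIw _] := andP gI; have g0 := (Iw_coset0 g).2 gIw.
have -> : Nmx S g - 1%:M = (g - 1%:M) *m theta S g + (theta S g - 1%:M).
  by rewrite /Nmx mulmxBl mul1mx addrA subrK.
apply: mx_geD; last exact: mx_ge_theta_sub1 (in_Iplus_sub1 gI).
have [_ thg _] := Iw_coset_theta g0.
by rewrite -[1]addr0 -[0]oppr0; apply: mx_geM (in_Iplus_sub1 gI) thg.
Qed.

Lemma Nmx_twisted_conj (y g : 'M[E]_m) : y \in unitmx -> g \in unitmx ->
  Nmx S (y *m g *m invmx (theta S y)) = y *m Nmx S g *m invmx y.
Proof.
move=> uy ug; have twty : twist (theta S y) = invmx y by rewrite thetaE twistK.
rewrite /Nmx !thetaM ?unitmx_mul ?uy ?ug ?unitmx_inv ?theta_unit //.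
rewrite theta_invmx invmx_theta // twty.
move: (twist_theta uy); move: (twist y) (theta S y) (theta S g) => T Ty Tg TTy.
by rewrite -!mulmxA (mulmxA T) TTy mul1mx.
Qed.

Lemma Iw_coset_ZIplusPhi (x : 'M[E]_m) : in_ZIplusPhi S x -> exists d, Iw_coset d x.
Proof.
case=> a [h [k [a0 hI ->]]]; exists (mval a + 0 + k).
apply: Iw_cosetM (Iw_coset_phi1_pow k); apply: Iw_cosetM (Iw_coset_scalar a0) _.
by apply/Iw_coset0; case/andP: hI.
Qed.

Lemma in_ZIPhi_of_Iw_coset d (y : 'M[E]_m) : Iw_coset d y -> in_ZIPhi S y.
Proof.
move=> yd; have [uphi _ _] := Iw_coset_phi1_pow d.
exists 1, (y *m invmx (mxpowz phi1 d)), d; split; rewrite ?oner_neq0 ?mul1mx ?mulmxKV //.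
apply/Iw_coset0; rewrite -(subrr d).
exact: Iw_cosetM yd (Iw_cosetV (Iw_coset_phi1_pow d)).
Qed.

Lemma twisted_conj_in_ZIPhi (g y : 'M[E]_m) :
  in_Iplus S g -> affine_generic S (Nmx S g) -> y \in unitmx ->
  in_ZIplusPhi S (y *m g *m invmx (theta S y)) -> in_ZIPhi S y.
Proof.
move=> gI ag uy /Iw_coset_ZIplusPhi[d xd].
have [ug _ _] := (Iw_coset0 g).2 (andP gI).1.
have N1 := affine_generic_phi1_like (Nmx_sub1 gI) ag.
have N'0 : mx_ge 0 (y *m Nmx S g *m invmx y - 1%:M).
  rewrite -Nmx_twisted_conj //; apply: mx_geB mx_ge1.
  by have [_ + _] := Iw_cosetM xd (Iw_coset_theta xd); rewrite subrr.
have intertwine :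
    (Nmx S g - 1%:M) *m invmx y = invmx y *m (y *m Nmx S g *m invmx y - 1%:M).
  by rewrite mulmxBl mulmxBr mul1mx mulmx1 -[y *m _ *m _]mulmxA mulKmx.
have uyV : invmx y \in unitmx by rewrite unitmx_inv.
have [e ye] := phi1_like_intertwiner N1 N'0 uyV intertwine.
by apply: (@in_ZIPhi_of_Iw_coset (- e)); rewrite -[y]invmxK; apply: Iw_cosetV.
Qed.

End Iwahori.

Theorem lemma3p5 (E : fieldType) (S : padic_unram_quad E) (n : nat)
    (g y : 'M[E]_(n.*2)) :
  (0 < n)%N ->
  in_Iplus S g ->
  affine_generic S (Nmx S g) ->
  y \in unitmx ->
  in_ZIplusPhi S (y *m g *m invmx (theta S y)) ->
  in_ZIPhi S y.
Proof.
move=> n0; have m_gt1 : (1 < n.*2)%N by rewrite -addnn; lia.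
have m_even : ~~ odd n.*2 by rewrite odd_double.
exact: (twisted_conj_in_ZIPhi (ltnW m_gt1) m_even m_gt1).
Qed.
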